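(* Let $M_1\in\mathbb{R}^{a\times d}$, $M_2\in\mathbb{R}^{b\times d}$, and let $\Psi_1:\mathbb{R}^s\to\mathbb{R}^{a\times s}$, $\Psi_2:\mathbb{R}^s\to\mathbb{R}^{b\times s}$ be arbitrary functions; set $\Phi_i(w)=\Psi_i(w)w$ for $i=1,2$. Let $X\in\mathbb{R}^d$, $w\in\mathbb{R}^s$, and $$Z_1=M_1X+\Phi_1(w),\qquad Z_2=M_2X+\Phi_2(w).$$ Let $L_1=\sup_{w'\in\mathbb{R}^s}\|\Psi_1(w')\|$, $L_2=\sup_{w'\in\mathbb{R}^s}\|\Psi_2(w')\|$ (assumed finite), and $\alpha=\inf_{w'\in\mathbb{R}^s}\sigma_{\min}\big((I-M_1M_1^+)\Psi_1(w')\big)$. Assume $\mathrm{Null}(M_1)\subseteq\mathrm{Null}(M_2)$. Then: (i) if $w=0$, then $\|Z_2\|\le\sigma_{\max}(M_2M_1^+)\|Z_1\|$; (ii) if $\alpha>0$, then $\|Z_2\|\le\big((1+L_1/\alpha)\,\sigma_{\max}(M_2M_1^+)+L_2/\alpha\big)\|Z_1\|$.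
   Context: $\|\cdot\|$ is the Euclidean norm on vectors and the induced operator (spectral) norm on matrices. For a matrix $M$, $\sigma_{\max}(M)=\max_{\|x\|=1}\|Mx\|$, $\sigma_{\min}(M)=\min_{\|x\|=1}\|Mx\|$ (which is zero if $M$ does not have full column rank), and $M^+$ is the Moore–Penrose pseudo-inverse. *)

From HB Require Import structures.
From mathcomp Require Import all_boot all_order all_algebra.
From mathcomp Require Import boolp classical_sets reals.
Set Implicit Arguments. Unset Strict Implicit. Unset Printing Implicit Defensive.
Import Order.TTheory GRing.Theory Num.Theory.
Local Open Scope ring_scope.
Local Open Scope classical_set_scope.

Section Defs.
Variable R : realType.

Definition vnorm (n : nat) (x : 'cV[R]_n) : R := Num.sqrt (\sum_i x i 0 ^+ 2).

Definition smax (m n : nat) (M : 'M[R]_(m, n)) : R :=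
  sup [set y | exists x : 'cV[R]_n, vnorm x = 1 /\ y = vnorm (M *m x)].

Definition smin (m n : nat) (M : 'M[R]_(m, n)) : R :=
  inf [set y | exists x : 'cV[R]_n, vnorm x = 1 /\ y = vnorm (M *m x)].

(* P is the Moore--Penrose pseudo-inverse of M (the four Penrose equations,
   which determine P uniquely) *)
Definition moore_penrose (m n : nat) (M : 'M[R]_(m, n)) (P : 'M[R]_(n, m)) : Prop :=
  [/\ M *m P *m M = M, P *m M *m P = P,
      (M *m P)^T = M *m P & (P *m M)^T = P *m M].

End Defs.

From HB Require Import structures.
From mathcomp Require Import all_boot all_order all_algebra.
From mathcomp Require Import boolp classical_sets reals.
From mathcomp Require Import ring lra.
Import Order.TTheory GRing.Theory Num.Theory.
Local Open Scope ring_scope.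
Local Open Scope classical_set_scope.
Set Implicit Arguments. Unset Strict Implicit. Unset Printing Implicit Defensive.

(* Since Null(M1) <= Null(M2), M2 X = (M2 M1^+) (M1 X), which gives (i) at once.
   For (ii), the orthogonal projector P = I - M1 M1^+ kills M1 X, so
   alpha |w| <= |P Psi1(w) w| = |P Z1| <= |Z1|; then |M1 X| <= |Z1| + L1 |w|
   and |Z2| <= sigma_max(M2 M1^+) |M1 X| + L2 |w| bound |Z2| by a multiple
   of |Z1|. *)

Section EuclideanNorm.
Variable R : realType.

Lemma sumr_sqr_ge0 n (f : 'I_n -> R) : 0 <= \sum_i f i ^+ 2.
Proof. by apply: sumr_ge0 => i _; exact: sqr_ge0. Qed.

Lemma sumr_mul_sqr_le n (f g : 'I_n -> R) :
  (\sum_i f i * g i) ^+ 2 <= (\sum_i f i ^+ 2) * (\sum_i g i ^+ 2).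
Proof.
set A := \sum_i f i ^+ 2; set B := \sum_i g i ^+ 2; set C := \sum_i f i * g i.
have A0 : 0 <= A := sumr_sqr_ge0 f; have B0 : 0 <= B := sumr_sqr_ge0 g.
have : 0 <= \sum_i (B * f i - C * g i) ^+ 2 by exact: sumr_sqr_ge0.
have -> : \sum_i (B * f i - C * g i) ^+ 2 = B ^+ 2 * A - 2 * B * C * C + C ^+ 2 * B.
  rewrite (eq_bigr (fun i => B ^+ 2 * f i ^+ 2 - (2 * B * C) * (f i * g i)
                             + C ^+ 2 * g i ^+ 2)); last by move=> i _; ring.
  by rewrite !big_split /= sumrN -!mulr_sumr.
move=> disc_ge0; have [B_eq0 | B_neq0] := eqVneq B 0; last first.
  have B_gt0 : 0 < B by rewrite lt_def B_neq0.
  nra.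
have g0 i : g i = 0.
  apply/eqP; rewrite -sqrf_eq0; move/eqP: B_eq0; rewrite psumr_eq0 => [|j _];
    last exact: sqr_ge0.
  by move/allP/(_ i (mem_index_enum _)).
have -> : C = 0 by rewrite /C big1 // => i _; rewrite g0 mulr0.
by rewrite expr2 mul0r mulr_ge0.
Qed.

Lemma vnorm_ge0 n (x : 'cV[R]_n) : 0 <= vnorm x.
Proof. exact: sqrtr_ge0. Qed.

Lemma vnorm_sqr n (x : 'cV[R]_n) : vnorm x ^+ 2 = \sum_i x i 0 ^+ 2.
Proof. by rewrite sqr_sqrtr // sumr_sqr_ge0. Qed.

Lemma vnormZ n c (x : 'cV[R]_n) : vnorm (c *: x) = `|c| * vnorm x.
Proof.
rewrite /vnorm (eq_bigr (fun i => c ^+ 2 * x i 0 ^+ 2)) => [|i _]; last first.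
  by rewrite mxE exprMn.
by rewrite -mulr_sumr sqrtrM ?sqr_ge0 // sqrtr_sqr.
Qed.

Lemma vnormN n (x : 'cV[R]_n) : vnorm (- x) = vnorm x.
Proof. by rewrite -scaleN1r vnormZ normrN normr1 mul1r. Qed.

Lemma vnormD n (x y : 'cV[R]_n) : vnorm (x + y) <= vnorm x + vnorm y.
Proof.
have nx := vnorm_ge0 x; have ny := vnorm_ge0 y.
set C := \sum_i x i 0 * y i 0.
have C_le : C <= vnorm x * vnorm y.
  have := sumr_mul_sqr_le (fun i => x i 0) (fun i => y i 0).
  rewrite -/C -!vnorm_sqr -exprMn; have := mulr_ge0 nx ny; nra.
rewrite -ler_sqr ?nnegrE ?addr_ge0 ?vnorm_ge0 // vnorm_sqr.
rewrite (eq_bigr (fun i => x i 0 ^+ 2 + 2 * (x i 0 * y i 0) + y i 0 ^+ 2));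
  last by move=> i _; rewrite mxE; ring.
rewrite !big_split /= -mulr_sumr -/C -!vnorm_sqr; nra.
Qed.

Lemma vnorm_mulmx_bounded m n (M : 'M[R]_(m, n)) :
  exists K, forall x, vnorm (M *m x) <= K * vnorm x.
Proof.
exists (Num.sqrt (\sum_i \sum_j M i j ^+ 2)) => x.
have sum2_ge0 : 0 <= \sum_i \sum_j M i j ^+ 2.
  by apply: sumr_ge0 => i _; exact: sumr_sqr_ge0.
rewrite /vnorm -sqrtrM // ler_sqrt ?mulr_ge0 ?sumr_sqr_ge0 // mulr_suml.
apply: ler_sum => i _; rewrite mxE.
exact: (sumr_mul_sqr_le (fun j => M i j) (fun j => x j 0)).
Qed.

End EuclideanNorm.

Section SingularValues.
Variable R : realType.

Definition mx_gains m n (M : 'M[R]_(m, n)) :=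
  [set y | exists x : 'cV[R]_n, vnorm x = 1 /\ y = vnorm (M *m x)].

Lemma mx_gains_ubound m n (M : 'M[R]_(m, n)) : has_ubound (mx_gains M).
Proof.
have [K MK] := vnorm_mulmx_bounded M.
by exists K => _ [x [x1 ->]]; rewrite -[K]mulr1 -x1.
Qed.

Lemma mx_gains_lbound m n (M : 'M[R]_(m, n)) : has_lbound (mx_gains M).
Proof. by exists 0 => _ [x [_ ->]]; exact: vnorm_ge0. Qed.

Lemma mx_gains_ratio m n (M : 'M[R]_(m, n)) x :
  0 < vnorm x -> mx_gains M (vnorm (M *m x) / vnorm x).
Proof.
move=> x_gt0; exists ((vnorm x)^-1 *: x).
rewrite -scalemxAr !vnormZ ger0_norm ?invr_ge0 ?ltW // mulVf ?gt_eqF //.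
by rewrite mulrC.
Qed.

Lemma mx_gains0 m n (M : 'M[R]_(m, n)) :
  ~ (exists x : 'cV[R]_n, vnorm x = 1) -> mx_gains M = set0.
Proof.
by move=> no_unit; apply/seteqP; split => y //= [x [x1 _]]; case: no_unit; exists x.
Qed.

Lemma smax_ge0 m n (M : 'M[R]_(m, n)) : 0 <= smax M.
Proof.
have [[x x1] | no_unit] := pselect (exists x : 'cV[R]_n, vnorm x = 1).
  apply: le_trans (vnorm_ge0 (M *m x)) _.
  by apply: (ub_le_sup (mx_gains_ubound M)); exists x.
by rewrite /smax -/(mx_gains M) mx_gains0 // sup0.
Qed.

Lemma smin_ge0 m n (M : 'M[R]_(m, n)) : 0 <= smin M.
Proof.
have [[x x1] | no_unit] := pselect (exists x : 'cV[R]_n, vnorm x = 1).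
  apply: lb_le_inf; first by exists (vnorm (M *m x)), x.
  by move=> _ [z [_ ->]]; exact: vnorm_ge0.
by rewrite /smin -/(mx_gains M) mx_gains0 // inf0.
Qed.

Lemma vnorm_mulmx_le_smax m n (M : 'M[R]_(m, n)) x :
  vnorm (M *m x) <= smax M * vnorm x.
Proof.
have [x_gt0 | x0] := ltrP 0 (vnorm x).
  rewrite -ler_pdivrMr //.
  exact: (ub_le_sup (mx_gains_ubound M) (mx_gains_ratio M x_gt0)).
have [K MK] := vnorm_mulmx_bounded M.
have {}x0 : vnorm x = 0 by apply/eqP; rewrite eq_le x0 vnorm_ge0.
by apply: le_trans (MK x) _; rewrite x0 !mulr0.
Qed.

Lemma smin_mul_vnorm_le m n (M : 'M[R]_(m, n)) x :
  smin M * vnorm x <= vnorm (M *m x).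
Proof.
have [x_gt0 | x0] := ltrP 0 (vnorm x).
  rewrite -ler_pdivlMr //.
  exact: (ge_inf (mx_gains_lbound M) (mx_gains_ratio M x_gt0)).
have {}x0 : vnorm x = 0 by apply/eqP; rewrite eq_le x0 vnorm_ge0.
by rewrite x0 mulr0 vnorm_ge0.
Qed.

Lemma vnorm_mulmx_le m n (M : 'M[R]_(m, n)) L x :
  smax M <= L -> vnorm (M *m x) <= L * vnorm x.
Proof.
move=> ML; apply: le_trans (vnorm_mulmx_le_smax M x) _.
by rewrite ler_wpM2r ?vnorm_ge0.
Qed.

End SingularValues.

Section OrthogonalProjection.
Variable R : realType.

Lemma vnorm_sqr_mxE n (x : 'cV[R]_n) : vnorm x ^+ 2 = (x^T *m x) 0 0.
Proof. by rewrite vnorm_sqr mxE; apply: eq_bigr => i _; rewrite mxE expr2. Qed.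

Lemma vnorm_sqrD_orth n (u v : 'cV[R]_n) : u^T *m v = 0 ->
  vnorm (u + v) ^+ 2 = vnorm u ^+ 2 + vnorm v ^+ 2.
Proof.
move=> uv0; have vu0 : v^T *m u = 0 by rewrite -[u]trmxK -trmx_mul uv0 trmx0.
by rewrite !vnorm_sqr_mxE [(u + v)^T]raddfD mulmxDl !mulmxDr uv0 vu0 addr0 add0r mxE.
Qed.

Lemma vnorm_proj_le n (P : 'M[R]_n) (v : 'cV[R]_n) :
  P^T = P -> P *m P = P -> vnorm (P *m v) <= vnorm v.
Proof.
move=> P_sym P_idem.
have orth : (P *m v)^T *m (v - P *m v) = 0.
  by rewrite trmx_mul P_sym mulmxBr -!mulmxA (mulmxA P P) P_idem subrr.
rewrite -ler_sqr ?nnegrE ?vnorm_ge0 //.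
have -> : vnorm v ^+ 2 = vnorm (P *m v) ^+ 2 + vnorm (v - P *m v) ^+ 2.
  by rewrite -vnorm_sqrD_orth // addrC subrK.
by rewrite lerDl sqr_ge0.
Qed.

End OrthogonalProjection.

Section PseudoInverse.
Variables (R : realType) (m n : nat) (M : 'M[R]_(m, n)) (Mp : 'M[R]_(n, m)).
Hypothesis MMp : moore_penrose M Mp.

Lemma mulmx_pinv_factor k (N : 'M[R]_(k, n)) :
  (forall x : 'cV[R]_n, M *m x = 0 -> N *m x = 0) ->
  forall x : 'cV[R]_n, N *m x = N *m Mp *m (M *m x).
Proof.
case: MMp => MMpM _ _ _ null_sub x; apply/eqP; rewrite -subr_eq0 -mulmxA.
rewrite -mulmxBr; apply/eqP/null_sub.
by rewrite mulmxBr !mulmxA MMpM subrr.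
Qed.

Lemma coproj_pinv_mulmx : (1%:M - M *m Mp) *m M = 0.
Proof. by case: MMp => MMpM _ _ _; rewrite mulmxBl mul1mx MMpM subrr. Qed.

Lemma vnorm_coproj_pinv_le v : vnorm ((1%:M - M *m Mp) *m v) <= vnorm v.
Proof.
case: MMp => MMpM _ MMp_sym _; apply: vnorm_proj_le.
  by rewrite raddfB /= trmx1 MMp_sym.
by rewrite mulmxBl mul1mx mulmxBr mulmx1 !mulmxA MMpM subrr subr0.
Qed.

Lemma smin_coproj_pinv_le s (Psi : 'M[R]_(m, s)) x w :
  smin ((1%:M - M *m Mp) *m Psi) * vnorm w <= vnorm (M *m x + Psi *m w).
Proof.
apply: le_trans (vnorm_coproj_pinv_le _); apply: le_trans (smin_mul_vnorm_le _ _) _.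
by rewrite mulmxDr mulmxA coproj_pinv_mulmx mul0mx add0r mulmxA.
Qed.

Lemma vnorm_pinv_factor_le k (N : 'M[R]_(k, n)) :
  (forall x : 'cV[R]_n, M *m x = 0 -> N *m x = 0) ->
  forall x, vnorm (N *m x) <= smax (N *m Mp) * vnorm (M *m x).
Proof.
by move=> null_sub x; rewrite (mulmx_pinv_factor null_sub) vnorm_mulmx_le_smax.
Qed.

Lemma vnorm_perturbed_pinv_le k s (N : 'M[R]_(k, n))
    (Psi1 : 'M[R]_(m, s)) (Psi2 : 'M[R]_(k, s)) (alpha L1 L2 : R) x w :
  (forall x : 'cV[R]_n, M *m x = 0 -> N *m x = 0) ->
  0 < alpha -> alpha <= smin ((1%:M - M *m Mp) *m Psi1) ->
  smax Psi1 <= L1 -> smax Psi2 <= L2 ->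
  vnorm (N *m x + Psi2 *m w) <=
    ((1 + L1 / alpha) * smax (N *m Mp) + L2 / alpha) * vnorm (M *m x + Psi1 *m w).
Proof.
move=> null_sub alpha_gt0 alpha_le L1_ge L2_ge.
set Z1 := M *m x + Psi1 *m w; set c := smax (N *m Mp).
have c_ge0 : 0 <= c := smax_ge0 _.
have L1_ge0 : 0 <= L1 := le_trans (smax_ge0 _) L1_ge.
have L2_ge0 : 0 <= L2 := le_trans (smax_ge0 _) L2_ge.
have w_le : vnorm w <= vnorm Z1 / alpha.
  rewrite ler_pdivlMr // mulrC; apply: le_trans (smin_coproj_pinv_le _ x w).
  by rewrite ler_wpM2r ?vnorm_ge0.
have Mx_le : vnorm (M *m x) <= vnorm Z1 + L1 * vnorm w.
  rewrite -[M *m x](addrK (Psi1 *m w)) -/Z1; apply: le_trans (vnormD _ _) _.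
  by rewrite vnormN lerD2l vnorm_mulmx_le.
apply: le_trans (vnormD _ _) _.
apply: le_trans (lerD (vnorm_pinv_factor_le null_sub x) (vnorm_mulmx_le w L2_ge)) _.
have -> : ((1 + L1 / alpha) * c + L2 / alpha) * vnorm Z1 =
   c * (vnorm Z1 + L1 * (vnorm Z1 / alpha)) + L2 * (vnorm Z1 / alpha) by ring.
apply: lerD; last exact: ler_wpM2l.
apply: ler_wpM2l => //; apply: le_trans Mx_le _.
by rewrite lerD2l; apply: ler_wpM2l.
Qed.

End PseudoInverse.

Theorem lemma3 (R : realType) (a b d s : nat)
  (M1 : 'M[R]_(a, d)) (M2 : 'M[R]_(b, d)) (M1p : 'M[R]_(d, a))
  (Psi1 : 'cV[R]_s -> 'M[R]_(a, s)) (Psi2 : 'cV[R]_s -> 'M[R]_(b, s))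
  (X : 'cV[R]_d) (w : 'cV[R]_s) :
  moore_penrose M1 M1p ->
  has_ubound [set y | exists w' : 'cV[R]_s, y = smax (Psi1 w')] ->
  has_ubound [set y | exists w' : 'cV[R]_s, y = smax (Psi2 w')] ->
  (forall x : 'cV[R]_d, M1 *m x = 0 -> M2 *m x = 0) ->
  let Z1 := M1 *m X + Psi1 w *m w in
  let Z2 := M2 *m X + Psi2 w *m w in
  let L1 := sup [set y | exists w' : 'cV[R]_s, y = smax (Psi1 w')] in
  let L2 := sup [set y | exists w' : 'cV[R]_s, y = smax (Psi2 w')] in
  let alpha := inf [set y | exists w' : 'cV[R]_s,
                       y = smin ((1%:M - M1 *m M1p) *m Psi1 w')] in
  (w = 0 -> vnorm Z2 <= smax (M2 *m M1p) * vnorm Z1) /\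
  (0 < alpha ->
     vnorm Z2 <= ((1 + L1 / alpha) * smax (M2 *m M1p) + L2 / alpha) * vnorm Z1).
Proof.
move=> MMp bnd1 bnd2 null_sub Z1 Z2 L1 L2 alpha.
split=> [w0 | alpha_gt0].
  by rewrite /Z2 /Z1 w0 !mulmx0 !addr0 vnorm_pinv_factor_le.
apply: vnorm_perturbed_pinv_le => //.
- by apply: (ge_inf _); [exists 0 => _ [w' ->]; exact: smin_ge0 | exists w].
- by apply: (ub_le_sup bnd1); exists w.
- by apply: (ub_le_sup bnd2); exists w.
Qed.
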